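(* Let $A\in\mathbb{R}^{m\times n}$ with $\lambda:=\lambda_{\max}(A^TA)>0$, $b\in\mathbb{R}^m$, and $D\subseteq\mathbb{R}^n$ a nonempty compact set. Given $x^0\in\mathbb{R}^n$ and $\gamma\in(0,\frac1{12\lambda})$, consider the iteration \[ y^{t+1}=[(5\gamma\lambda+1)I+\gamma A^TA]^{-1}(x^t+\gamma A^Tb),\quad z^{t+1}\in P_D\!\left(\frac{2y^{t+1}-x^t}{1-5\lambda\gamma}\right),\quad x^{t+1}=x^t+2(z^{t+1}-y^{t+1}). \] Then $\{(y^t,z^t,x^t)\}$ is bounded and every cluster point $(\bar y,\bar z,\bar x)$ satisfies $\bar y=\bar z$ and $0\in A^T(A\bar z-b)+\partial\delta_D(\bar z)$, i.e., $\bar z$ is a stationary point of $\min_{u\in D}\frac12\|Au-b\|^2$.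
   Context: $P_D(x)$ denotes the (possibly multivalued) set of points of $D$ nearest to $x$ (any element may be chosen); $\delta_D$ is the indicator function of $D$; $\partial\delta_D$ is the limiting subdifferential: $v\in\partial h(x)$ iff there exist $x^t\to x$ with $h(x^t)\to h(x)$ and $v^t\to v$ such that $\liminf_{z\to x^t, z\ne x^t}\frac{h(z)-h(x^t)-\langle v^t,z-x^t\rangle}{\|z-x^t\|}\ge0$ for each $t$. *)

From mathcomp Require Import all_boot.
From Stdlib Require Import Reals ClassicalEpsilon.

Set Implicit Arguments.
Unset Strict Implicit.

Local Open Scope R_scope.

Definition vec (n : nat) := 'I_n -> R.
Definition mat (m n : nat) := 'I_m -> 'I_n -> R.

Definition vzero {n} : vec n := fun _ => 0.
Definition vadd {n} (u v : vec n) : vec n := fun i => u i + v i.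
Definition vsub {n} (u v : vec n) : vec n := fun i => u i - v i.
Definition vscale {n} (a : R) (u : vec n) : vec n := fun i => a * u i.
Definition vopp {n} (u : vec n) : vec n := fun i => - u i.

Definition dot {n} (u v : vec n) : R := \big[Rplus/0]_(i < n) (u i * v i).
Definition norm {n} (u : vec n) : R := sqrt (dot u u).

Definition mv {m n} (A : mat m n) (x : vec n) : vec m :=
  fun i => \big[Rplus/0]_(j < n) (A i j * x j).
Definition tr {m n} (A : mat m n) : mat n m := fun j i => A i j.
Definition mm {m n p} (A : mat m n) (B : mat n p) : mat m p :=
  fun i k => \big[Rplus/0]_(j < n) (A i j * B j k).
Definition idm {n} : mat n n := fun i j => if i == j then 1 else 0.
Definition madd {m n} (A B : mat m n) : mat m n := fun i j => A i j + B i j.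
Definition mscale {m n} (a : R) (A : mat m n) : mat m n := fun i j => a * A i j.

Definition eigenvalue {n} (M : mat n n) (l : R) : Prop :=
  exists v : vec n, v <> vzero /\ mv M v = vscale l v.
Definition is_lambda_max {n} (M : mat n n) (l : R) : Prop :=
  eigenvalue M l /\ forall l', eigenvalue M l' -> l' <= l.

Definition open_set {n} (U : vec n -> Prop) : Prop :=
  forall x, U x -> exists r, 0 < r /\ forall y, norm (vsub y x) < r -> U y.
Definition compact_set {n} (D : vec n -> Prop) : Prop :=
  forall (I : Type) (U : I -> vec n -> Prop),
    (forall i, open_set (U i)) ->
    (forall x, D x -> exists i, U i x) ->
    exists l : list I, forall x, D x -> exists i, List.In i l /\ U i x.

Definition seq_conv {n} (s : nat -> vec n) (l : vec n) : Prop :=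
  forall eps, 0 < eps -> exists N, forall k, (N <= k)%nat -> norm (vsub (s k) l) < eps.
Definition seq_bounded {n} (s : nat -> vec n) : Prop :=
  exists M, forall t, norm (s t) <= M.

Definition proj_set {n} (D : vec n -> Prop) (x z : vec n) : Prop :=
  D z /\ forall u, D u -> norm (vsub x z) <= norm (vsub x u).

(* extended-real-valued functions: None stands for +infinity *)
Definition xfun (n : nat) := vec n -> option R.

Definition indicator {n} (D : vec n -> Prop) : xfun n :=
  fun x => if excluded_middle_informative (D x) then Some 0 else None.

(* Frechet (regular) subgradient: h finite at x and
   liminf_{z -> x, z <> x} (h z - h x - <v, z - x>)/||z - x|| >= 0 *)
Definition frechet_subgrad {n} (h : xfun n) (x v : vec n) : Prop :=
  exists hx, h x = Some hx /\
  forall eps, 0 < eps -> exists d, 0 < d /\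
    forall z, 0 < norm (vsub z x) < d ->
      match h z with
      | None => True
      | Some hz => hz - hx - dot v (vsub z x) >= - eps * norm (vsub z x)
      end.

Definition xval_conv {n} (h : xfun n) (s : nat -> vec n) (x : vec n) : Prop :=
  exists hx, h x = Some hx /\
  forall eps, 0 < eps -> exists N, forall k, (N <= k)%nat ->
    exists r, h (s k) = Some r /\ Rabs (r - hx) < eps.

Definition limiting_subgrad {n} (h : xfun n) (x v : vec n) : Prop :=
  exists (xs vs : nat -> vec n),
    seq_conv xs x /\ xval_conv h xs x /\ seq_conv vs v /\
    forall t, frechet_subgrad h (xs t) (vs t).

Definition cluster_point3 {n} (y z x : nat -> vec n) (yb zb xb : vec n) : Prop :=
  exists phi : nat -> nat, (forall k, (phi k < phi (S k))%nat) /\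
    seq_conv (fun k => y (phi k)) yb /\ seq_conv (fun k => z (phi k)) zb /\
    seq_conv (fun k => x (phi k)) xb.

(* Write alpha = 5 gamma lambda, beta = gamma / (1 - alpha), M = A^T A, c = A^T b and
   grad u = M u - c.  The y-update says x^t = (1 + alpha) y^{t+1} + gamma grad y^{t+1}, so the
   z-update is the projected gradient step z^{t+1} in P_D(y^{t+1} - beta grad y^{t+1}).
   The merit function
     Phi(Y, Z) = gamma f(Z) + 1/2 ((1 - alpha) |Z - Y|^2 - gamma <M (Z - Y), Z - Y>)
   differs from 1/2 (1 - alpha) |Z - (Y - beta grad Y)|^2 by a function of Y alone, so the
   z-update minimises Phi(y^{t+1}, .) over D; the y-update decreases it by at least
   alpha (1 - alpha)/2 |y^{t+2} - y^{t+1}|^2, which dominates the same multiple of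
   |z^{t+1} - y^{t+1}|^2 (both use gamma lambda < 1/12).  As Phi is bounded below on the
   compact set D, z^t - y^t -> 0, which gives boundedness; at a cluster point the proximal
   normals (y^t - z^t)/beta - grad y^t of D at z^t tend to - grad zb. *)

From Pilot Require Import Defs.
From HB Require Import structures.
From mathcomp Require Import all_boot.
From Stdlib Require Import Reals Lra Psatz FunctionalExtensionality Classical ClassicalEpsilon List.
From mathcomp Require all_algebra Rstruct.
Set Implicit Arguments.
Unset Strict Implicit.
Local Open Scope R_scope.

HB.instance Definition _ := Monoid.isComLaw.Build R 0 Rplus
  (fun a b c => esym (Rplus_assoc a b c)) Rplus_comm Rplus_0_l.

Lemma mulR_sumr n a (F : 'I_n -> R) :
  a * \big[Rplus/0]_(i < n) F i = \big[Rplus/0]_(i < n) (a * F i).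
Proof. elim/big_rec2: _ => [|i x y _ <-]; ring. Qed.

Lemma sumR_ge0 n (F : 'I_n -> R) :
  (forall i, 0 <= F i) -> 0 <= \big[Rplus/0]_(i < n) F i.
Proof. move=> F_ge0; elim/big_ind: _ => //; [lra | move=> x y; lra]. Qed.

Lemma quadratic_nonneg_discr a b c :
  0 <= a -> (forall t, 0 <= a * t * t + 2 * b * t + c) -> b * b <= a * c.
Proof.
move=> a_ge0 H; case: (Rle_lt_or_eq_dec 0 a a_ge0) => [a_gt0 | a0]; last subst a.
- have := H (- b / a).
  have -> : a * (- b / a) * (- b / a) + 2 * b * (- b / a) + c
            = (a * c - b * b) / a by field; lra.
  move=> h; have : 0 <= (a * c - b * b) / a * a by apply: Rmult_le_pos; lra.
  have -> : (a * c - b * b) / a * a = a * c - b * b by field; lra.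
  lra.
- case: (Req_dec b 0) => [-> | b_neq0]; first lra.
  have := H (- (c + 1) / (2 * b)).
  have -> : 0 * (- (c + 1) / (2 * b)) * (- (c + 1) / (2 * b))
            + 2 * b * (- (c + 1) / (2 * b)) + c = -1 by field.
  lra.
Qed.

Section Vectors.
Context {n : nat}.
Implicit Types u v w : vec n.

Lemma vec_ext u v : (forall i, u i = v i) -> u = v.
Proof. exact: functional_extensionality. Qed.

Lemma vsub0r u : vsub u vzero = u.
Proof. by apply: vec_ext => i; rewrite /vsub /vzero Rminus_0_r. Qed.

Lemma dotC u v : dot u v = dot v u.
Proof. by apply: eq_bigr => i _; rewrite Rmult_comm. Qed.

Lemma dotDl u v w : dot (vadd u v) w = dot u w + dot v w.
Proof. by rewrite /dot -big_split; apply: eq_bigr => i _; rewrite Rmult_plus_distr_r. Qed.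

Lemma dotDr u v w : dot w (vadd u v) = dot w u + dot w v.
Proof. by rewrite !(dotC w) dotDl. Qed.

Lemma dotZl a u v : dot (vscale a u) v = a * dot u v.
Proof. by rewrite /dot mulR_sumr; apply: eq_bigr => i _; rewrite Rmult_assoc. Qed.

Lemma dotZr a u v : dot v (vscale a u) = a * dot v u.
Proof. by rewrite !(dotC v) dotZl. Qed.

Lemma dotNl u v : dot (vopp u) v = - dot u v.
Proof.
have -> : vopp u = vscale (-1) u by apply: vec_ext => i; rewrite /vopp /vscale; ring.
by rewrite dotZl; ring.
Qed.

Lemma dotNr u v : dot v (vopp u) = - dot v u.
Proof. by rewrite !(dotC v) dotNl. Qed.

Lemma dotBl u v w : dot (vsub u v) w = dot u w - dot v w.
Proof.
have -> : vsub u v = vadd u (vopp v) by [].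
by rewrite dotDl dotNl.
Qed.

Lemma dotBr u v w : dot w (vsub u v) = dot w u - dot w v.
Proof. by rewrite !(dotC w) dotBl. Qed.

Lemma dot0l v : dot vzero v = 0.
Proof. by rewrite /dot big1 // => i _; rewrite /vzero Rmult_0_l. Qed.

Lemma dot_ge0 u : 0 <= dot u u.
Proof. by apply: sumR_ge0 => i; apply: Rle_0_sqr. Qed.

Lemma dot_eq0 u : dot u u = 0 -> u = vzero.
Proof.
move=> H; apply: vec_ext => i; move: H; rewrite /vzero /dot (bigD1 i) //=.
have : 0 <= \big[Rplus/0]_(j < n | j != i) (u j * u j).
  by elim/big_ind: _ => //; [lra | move=> x y; lra | move=> j _; nra].
set S := \big[Rplus/0]_(j < n | j != i) _; move=> *; nra.
Qed.

Lemma dot_cauchy_schwarz u v : dot u v * dot u v <= dot u u * dot v v.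
Proof.
rewrite (Rmult_comm (dot u u)); apply: quadratic_nonneg_discr; first exact: dot_ge0.
move=> t; have := dot_ge0 (vadd u (vscale t v)).
rewrite !dotDl !dotDr !dotZl !dotZr (dotC v u); lra.
Qed.

Lemma norm_ge0 u : 0 <= norm u.
Proof. exact: sqrt_pos. Qed.

Lemma norm_sq u : norm u * norm u = dot u u.
Proof. by rewrite /norm sqrt_sqrt //; apply: dot_ge0. Qed.

Lemma dot_le_norm u v : dot u v <= norm u * norm v.
Proof.
have := dot_cauchy_schwarz u v; rewrite -!norm_sq.
have : 0 <= norm u * norm v by apply: Rmult_le_pos; apply: norm_ge0.
rewrite [_ * _ * (_ * _)](_ : _ = (norm u * norm v) * (norm u * norm v)); last ring.
set P := norm u * norm v; move=> *; nra.
Qed.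

Lemma norm_le_of_dot u v : dot u u <= dot v v -> norm u <= norm v.
Proof. exact: sqrt_le_1_alt. Qed.

Lemma dot_le_of_norm u v : norm u <= norm v -> dot u u <= dot v v.
Proof. by rewrite -!norm_sq; have := norm_ge0 u; move=> *; nra. Qed.

Lemma norm_lt_of_dot u e : 0 < e -> dot u u < e * e -> norm u < e.
Proof. by rewrite -norm_sq; have := norm_ge0 u; move=> *; nra. Qed.

Lemma norm_eq0 u : norm u = 0 -> u = vzero.
Proof. by move=> H; apply: dot_eq0; rewrite -norm_sq H Rmult_0_l. Qed.

Lemma normZ a u : norm (vscale a u) = Rabs a * norm u.
Proof.
rewrite /norm dotZl dotZr -Rmult_assoc sqrt_mult_alt; last exact: Rle_0_sqr.
by rewrite sqrt_Rsqr_abs.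
Qed.

Lemma normN u : norm (vopp u) = norm u.
Proof. by rewrite /norm dotNl dotNr Ropp_involutive. Qed.

Lemma norm_vadd_le u v : norm (vadd u v) <= norm u + norm v.
Proof.
apply: Rsqr_incr_0_var; last by have := norm_ge0 u; have := norm_ge0 v; lra.
rewrite /Rsqr norm_sq dotDl !dotDr (dotC v u) -!norm_sq.
have := dot_le_norm u v; lra.
Qed.

Lemma norm_subC u v : norm (vsub u v) = norm (vsub v u).
Proof.
have -> : vsub u v = vopp (vsub v u) by apply: vec_ext => i; rewrite /vopp /vsub; ring.
exact: normN.
Qed.

Lemma norm_vsub_le u v : norm (vsub u v) <= norm u + norm v.
Proof. by rewrite -(normN v); apply: norm_vadd_le. Qed.

Lemma norm_sub_triangle u v w : norm (vsub u w) <= norm (vsub u v) + norm (vsub v w).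
Proof.
have -> : vsub u w = vadd (vsub u v) (vsub v w) by apply: vec_ext => i; rewrite /vadd /vsub; ring.
exact: norm_vadd_le.
Qed.

Lemma norm_le_sub u v : norm u <= norm (vsub u v) + norm v.
Proof.
have E : vadd (vsub u v) v = u by apply: vec_ext => i; rewrite /vadd /vsub; ring.
by rewrite -{1}E; apply: norm_vadd_le.
Qed.

End Vectors.

Section MatrixVector.
Context {m n : nat}.
Implicit Types (A : mat m n) (u v : vec n).

Lemma mvD A u v : mv A (vadd u v) = vadd (mv A u) (mv A v).
Proof.
by apply: vec_ext => i; rewrite /mv /vadd /= -big_split; apply: eq_bigr => j _;
  rewrite Rmult_plus_distr_l.
Qed.

Lemma mvZ A a u : mv A (vscale a u) = vscale a (mv A u).
Proof.
by apply: vec_ext => i; rewrite /mv /vscale mulR_sumr; apply: eq_bigr => j _; ring.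
Qed.

Lemma mvN A u : mv A (vopp u) = vopp (mv A u).
Proof.
have E w : vopp w = vscale (-1) w by apply: vec_ext => i; rewrite /vopp /vscale; ring.
by rewrite !E mvZ.
Qed.

Lemma mvB A u v : mv A (vsub u v) = vsub (mv A u) (mv A v).
Proof. by rewrite [vsub u v](_ : _ = vadd u (vopp v)) // mvD mvN. Qed.

Lemma mv0 A : mv A vzero = vzero.
Proof. by apply: vec_ext => i; rewrite /mv /vzero big1 // => j _; ring. Qed.

Lemma dot_mv_tr A u (w : vec m) : dot (mv A u) w = dot u (mv (tr A) w).
Proof.
rewrite /dot /mv /tr.
transitivity (\big[Rplus/0]_(i < m) \big[Rplus/0]_(j < n) (A i j * u j * w i)).
  by apply: eq_bigr => i _; rewrite Rmult_comm mulR_sumr; apply: eq_bigr => j _; ring.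
rewrite exchange_big; apply: eq_bigr => j _; rewrite mulR_sumr.
by apply: eq_bigr => i _; ring.
Qed.

Lemma mv_madd A B u : mv (madd A B) u = vadd (mv A u) (mv B u).
Proof.
by apply: vec_ext => i; rewrite /mv /vadd /madd /= -big_split;
  apply: eq_bigr => j _; rewrite Rmult_plus_distr_r.
Qed.

Lemma mv_mscale a A u : mv (mscale a A) u = vscale a (mv A u).
Proof.
by apply: vec_ext => i; rewrite /mv /vscale /mscale mulR_sumr; apply: eq_bigr => j _; ring.
Qed.

Lemma mv_norm_bound A : exists C, 0 < C /\ forall u, norm (mv A u) <= C * norm u.
Proof.
pose C := \big[Rplus/0]_(i < m) dot (A i) (A i).
have C_ge0 : 0 <= C by apply: sumR_ge0 => i; apply: dot_ge0.
have dot_bound u : dot (mv A u) (mv A u) <= C * dot u u.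
  rewrite {1}/dot Rmult_comm mulR_sumr.
  elim/big_rec2: _ => [|i x y _ Hxy]; first lra.
  have := dot_cauchy_schwarz (A i) u; rewrite -[mv A u i]/(dot (A i) u); lra.
exists (sqrt C + 1); split; first by have := sqrt_pos C; lra.
move=> u; apply: Rle_trans (_ : sqrt C * norm u <= _); last first.
  by have := norm_ge0 u; move=> *; nra.
rewrite /norm -sqrt_mult_alt //; exact: sqrt_le_1_alt.
Qed.

End MatrixVector.

Lemma mv_mm {m n p} (B : mat m n) (A : mat n p) u : mv (mm B A) u = mv B (mv A u).
Proof.
apply: vec_ext => i; rewrite /mv /mm.
transitivity (\big[Rplus/0]_(k < p) \big[Rplus/0]_(j < n) (B i j * A j k * u k)).
  by apply: eq_bigr => k _; rewrite Rmult_comm mulR_sumr; apply: eq_bigr => j _; ring.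
rewrite exchange_big; apply: eq_bigr => j _; rewrite mulR_sumr.
by apply: eq_bigr => k _; ring.
Qed.

Lemma mv_idm {n} (u : vec n) : mv idm u = u.
Proof.
apply: vec_ext => i; rewrite /mv /idm (bigD1 i) //= eqxx big1; first ring.
by move=> j /negPf; rewrite eq_sym => ->; ring.
Qed.

Lemma quad_form_bound {n} (N : mat n n) :
  exists C, 0 < C /\ forall u, dot (mv N u) u <= C * dot u u.
Proof.
have [C [C_gt0 HC]] := mv_norm_bound N.
exists C; split => // u; rewrite -norm_sq.
apply: Rle_trans (dot_le_norm _ _) _.
by have := HC u; have := norm_ge0 u; move=> *; nra.
Qed.

Module InverseBound.
Import all_algebra Rstruct.
Local Open Scope ring_scope.

Lemma injective_mv_lower_bound n (N : mat n n) :
  (forall v, mv N v = vzero -> v = vzero) ->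
  exists C, Rlt 0 C /\ forall v, Rle (norm v) (Rmult C (norm (mv N v))).
Proof.
move=> N_inj.
pose Nm : 'M[R]_n := \matrix_(i, j) N j i.
have rowE (v : vec n) : (\row_i v i) *m Nm = \row_i mv N v i.
  apply/rowP => k; rewrite !mxE; apply: eq_bigr => i _; rewrite !mxE; exact: Rmult_comm.
have Nm_unit : Nm \in unitmx.
  rewrite unitmxE GRing.unitfE; apply/negP => /det0P [w w_neq0 Hw].
  pose v : vec n := fun i => w ord0 i.
  have Nv0 : mv N v = vzero.
    apply: vec_ext => k; have := congr1 (fun M : 'M[R]_(1, n) => M ord0 k) Hw.
    rewrite !mxE /= => H; rewrite /vzero; change (IZR Z0) with (GRing.zero : R).
    rewrite -H /mv; apply: eq_bigr => i _; rewrite !mxE; exact: Rmult_comm.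
  move/negP: w_neq0; apply; apply/eqP/rowP => i.
  by rewrite !mxE; exact: (congr1 (fun f => f i) (N_inj v Nv0)).
pose Bt : mat n n := fun k i => invmx Nm i k.
have [C [C_gt0 HC]] := mv_norm_bound Bt.
exists C; split => // v.
have E : v = mv Bt (mv N v).
  apply: vec_ext => k.
  have := congr1 (fun M : 'M[R]_(1, n) => M ord0 k) (mulmxK Nm_unit (\row_i v i)).
  rewrite rowE !mxE => <-; apply: eq_bigr => i _; rewrite !mxE; exact: Rmult_comm.
by have := HC (mv N v); rewrite -E.
Qed.

End InverseBound.
Import InverseBound.

Definition mat_sym {n} (M : mat n n) := forall i j, M i j = M j i.

Section SymmetricMatrix.
Context {n : nat}.
Implicit Types (M N : mat n n) (u v w : vec n).

Lemma dot_mv_sym M : mat_sym M -> forall v w, dot (mv M w) v = dot (mv M v) w.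
Proof.
move=> M_sym v w; rewrite dot_mv_tr dotC.
suff -> : tr M = M by [].
by do 2 apply: functional_extensionality => ?; rewrite /tr M_sym.
Qed.

Lemma psd_cauchy_schwarz N : mat_sym N -> (forall w, 0 <= dot (mv N w) w) ->
  forall v w, dot (mv N v) w * dot (mv N v) w <= dot (mv N v) v * dot (mv N w) w.
Proof.
move=> N_sym N_psd v w; rewrite (Rmult_comm (dot (mv N v) v)).
apply: quadratic_nonneg_discr; first exact: N_psd.
move=> t; have := N_psd (vadd v (vscale t w)).
rewrite mvD mvZ !dotDl !dotDr !dotZl !dotZr (dot_mv_sym N_sym v w); lra.
Qed.

(* Cauchy-Schwarz for the form of N gives |Nv|^2 <= C <Nv, v>, and injectivity bounds |v|
   by a multiple of |Nv|. *)
Lemma psd_injective_coercive N : mat_sym N -> (forall w, 0 <= dot (mv N w) w) ->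
  (forall v, mv N v = vzero -> v = vzero) ->
  exists e, 0 < e /\ forall v, e * dot v v <= dot (mv N v) v.
Proof.
move=> N_sym N_psd N_inj.
have [C1 [C1_gt0 HC1]] := injective_mv_lower_bound N_inj.
have [C2 [C2_gt0 HC2]] := quad_form_bound N.
have K_gt0 : 0 < C1 * C1 * C2 by apply: Rmult_lt_0_compat => //; apply: Rmult_lt_0_compat.
exists (/ (C1 * C1 * C2)); split; first exact: Rinv_0_lt_compat.
move=> v.
have hcs := psd_cauchy_schwarz N_sym N_psd v (mv N v).
have hNv := HC2 (mv N v).
have hv : dot v v <= C1 * C1 * dot (mv N v) (mv N v).
  rewrite -!norm_sq; have := HC1 v; have := norm_ge0 v; move=> *; nra.
have := N_psd v; have := dot_ge0 (mv N v).
set a := dot (mv N v) (mv N v) in hcs hNv hv *; set p := dot (mv N v) v in hcs *.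
move=> a_ge0 p_ge0.
have a_le : a <= C2 * p.
  have h1 : a * a <= C2 * p * a.
    have := Rmult_le_compat_l p _ _ p_ge0 hNv; rewrite Rmult_assoc; lra.
  have : 0 <= C2 * p by apply: Rmult_le_pos; lra.
  move: h1; set q := C2 * p; move=> *; nra.
apply: (Rmult_le_reg_l (C1 * C1 * C2)) => //.
rewrite -Rmult_assoc Rinv_r; last lra.
nra.
Qed.

Lemma quad_form_sup M : (exists v, v <> vzero) ->
  exists s, (forall v, dot (mv M v) v <= s * dot v v) /\
    forall s', (forall v, dot (mv M v) v <= s' * dot v v) -> s <= s'.
Proof.
move=> [v0 v0_neq0].
have unit_quad v : v <> vzero -> exists a, dot (vscale a v) (vscale a v) = 1 /\
    dot (mv M (vscale a v)) (vscale a v) * dot v v = dot (mv M v) v.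
  move=> v_neq0; have nv_gt0 : 0 < norm v.
    by case: (Rle_lt_or_eq_dec _ _ (norm_ge0 v)) => // /esym /norm_eq0.
  exists (/ norm v); rewrite mvZ !dotZl !dotZr -!norm_sq; split; field; lra.
pose E r := exists v, dot v v = 1 /\ r = dot (mv M v) v.
have [C [_ HC]] := quad_form_bound M.
have E_bound : bound E by exists C => _ [v [v_unit ->]]; have := HC v; rewrite v_unit; lra.
have E_ne : exists r, E r.
  by have [a [Ha _]] := unit_quad v0 v0_neq0; do 2 eexists; split; first exact: Ha.
have [s [s_ub s_lub]] := completeness E E_bound E_ne.
exists s; split.
- move=> v; case: (classic (v = vzero)) => [-> | v_neq0].
    by rewrite mv0 !dot0l; lra.
  have [a [Ha <-]] := unit_quad v v_neq0.
  have := s_ub _ (ex_intro _ _ (conj Ha erefl)); have := dot_ge0 v; move=> *; nra.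
- move=> s' Hs'; apply: s_lub => _ [v [v_unit ->]]; have := Hs' v; rewrite v_unit; lra.
Qed.

(* If sI - M were injective it would be positive definite, and s could be lowered. *)
Lemma least_quad_bound_eigenvalue M s : mat_sym M ->
  (forall v, dot (mv M v) v <= s * dot v v) ->
  (forall s', (forall v, dot (mv M v) v <= s' * dot v v) -> s <= s') ->
  eigenvalue M s.
Proof.
move=> M_sym s_ub s_least; apply: NNPP => not_eig.
pose N : mat n n := madd (mscale s idm) (mscale (-1) M).
have NE v : mv N v = vsub (vscale s v) (mv M v).
  rewrite /N mv_madd !mv_mscale mv_idm.
  by apply: vec_ext => i; rewrite /vadd /vsub /vscale; ring.
have N_sym : mat_sym N by move=> i j; rewrite /N /madd /mscale /idm (eq_sym i j) M_sym.
have N_psd w : 0 <= dot (mv N w) w by rewrite NE dotBl dotZl; have := s_ub w; lra.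
have N_inj v : mv N v = vzero -> v = vzero.
  move=> Nv0; apply: NNPP => v_neq0; apply: not_eig; exists v; split => //.
  apply: vec_ext => i; have := congr1 (fun f => f i) Nv0.
  by rewrite NE /vsub /vscale /vzero /=; lra.
have [e [e_gt0 He]] := psd_injective_coercive N_sym N_psd N_inj.
have : s <= s - e.
  by apply: s_least => v; have := He v; rewrite NE dotBl dotZl; lra.
lra.
Qed.

Lemma quad_le_lambda_max M lam : mat_sym M -> is_lambda_max M lam ->
  forall v, dot (mv M v) v <= lam * dot v v.
Proof.
move=> M_sym [[v0 [v0_neq0 _]] lam_max].
have [s [s_ub s_least]] := quad_form_sup M (ex_intro _ v0 v0_neq0).
have s_le : s <= lam := lam_max s (least_quad_bound_eigenvalue M_sym s_ub s_least).
by move=> v; have := s_ub v; have := dot_ge0 v; move=> *; nra.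
Qed.

End SymmetricMatrix.

Section Sequences.
Context {n : nat}.
Implicit Types (s r : nat -> vec n) (l : vec n).

Lemma seq_bounded_eventually s N B :
  (forall k, (N <= k)%nat -> norm (s k) <= B) -> seq_bounded s.
Proof.
elim: N B => [|N IH] B HB; first by exists B => k; apply: HB.
apply: (IH (Rmax B (norm (s N)))) => k; rewrite leq_eqVlt => /orP [/eqP <- | /HB].
- exact: Rmax_r.
- by move=> h; apply: Rle_trans h (Rmax_l _ _).
Qed.

Lemma seq_conv_bounded s l : seq_conv s l -> seq_bounded s.
Proof.
move=> /(_ 1 Rlt_0_1) [N HN]; apply: (@seq_bounded_eventually _ N (norm l + 1)) => k /HN.
by have := norm_le_sub (s k) l; lra.
Qed.

Lemma seq_bounded_sub s r :
  seq_bounded s -> seq_bounded r -> seq_bounded (fun k => vsub (s k) (r k)).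
Proof.
move=> [B HB] [B' HB']; exists (B + B') => k.
by have := norm_vsub_le (s k) (r k); have := HB k; have := HB' k; lra.
Qed.

Lemma seq_bounded_mv {m} (A : mat m n) s : seq_bounded s -> seq_bounded (fun k => mv A (s k)).
Proof.
move=> [B HB]; have [C [C_gt0 HC]] := mv_norm_bound A; exists (C * B) => k.
apply: Rle_trans (HC _) _; exact: Rmult_le_compat_l (Rlt_le _ _ C_gt0) (HB k).
Qed.

Lemma seq_conv_const l : seq_conv (fun _ => l) l.
Proof.
move=> eps eps_gt0; exists 0%nat => k _.
have -> : vsub l l = vzero by apply: vec_ext => i; rewrite /vsub /vzero; ring.
by rewrite /norm dot0l sqrt_0.
Qed.

Lemma seq_conv_sub s r a b : seq_conv s a -> seq_conv r b ->
  seq_conv (fun k => vsub (s k) (r k)) (vsub a b).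
Proof.
move=> s_cv r_cv eps eps_gt0.
have [N1 HN1] := s_cv (eps / 2) ltac:(lra); have [N2 HN2] := r_cv (eps / 2) ltac:(lra).
exists (maxn N1 N2) => k; rewrite geq_max => /andP [/HN1 h1 /HN2 h2].
have -> : vsub (vsub (s k) (r k)) (vsub a b) = vsub (vsub (s k) a) (vsub (r k) b).
  by apply: vec_ext => i; rewrite /vsub; ring.
by have := norm_vsub_le (vsub (s k) a) (vsub (r k) b); lra.
Qed.

Lemma seq_conv_mv {m} (A : mat m n) s l : seq_conv s l ->
  seq_conv (fun k => mv A (s k)) (mv A l).
Proof.
move=> s_cv eps eps_gt0; have [C [C_gt0 HC]] := mv_norm_bound A.
have [N HN] := s_cv (eps / C) (Rdiv_lt_0_compat _ _ eps_gt0 C_gt0).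
exists N => k /HN h; rewrite -mvB; apply: Rle_lt_trans (HC _) _.
rewrite (_ : eps = C * (eps / C)); last by field; lra.
exact: Rmult_lt_compat_l.
Qed.

Lemma seq_conv_scale a s l : seq_conv s l ->
  seq_conv (fun k => vscale a (s k)) (vscale a l).
Proof.
have E v : vscale a v = mv (mscale a idm) v by rewrite mv_mscale mv_idm.
have -> : (fun k => vscale a (s k)) = fun k => mv (mscale a idm) (s k).
  by apply: functional_extensionality => k; rewrite E.
by rewrite E; apply: seq_conv_mv.
Qed.

Lemma seq_conv_unique s a b : seq_conv s a -> seq_conv s b -> a = b.
Proof.
move=> a_cv b_cv.
have small eps : 0 < eps -> norm (vsub a b) < eps.
  move=> eps_gt0.
  have [N1 HN1] := a_cv (eps / 2) ltac:(lra); have [N2 HN2] := b_cv (eps / 2) ltac:(lra).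
  have := HN1 (maxn N1 N2) (leq_maxl _ _); have := HN2 (maxn N1 N2) (leq_maxr _ _).
  have := norm_sub_triangle a (s (maxn N1 N2)) b; rewrite (norm_subC a (s _)); lra.
have : norm (vsub a b) = 0.
  case: (Rle_lt_or_eq_dec _ _ (norm_ge0 (vsub a b))) => [/small | //]; lra.
move=> /norm_eq0 ab0; apply: vec_ext => i.
by have := congr1 (fun f => f i) ab0; rewrite /vsub /vzero /=; lra.
Qed.

Lemma seq_conv_subseq s l (phi : nat -> nat) : (forall k, (phi k < phi k.+1)%nat) ->
  seq_conv s l -> seq_conv (fun k => s (phi k)) l.
Proof.
move=> phi_incr s_cv eps /s_cv [N HN]; exists N => k Nk; apply: HN.
suff : (k <= phi k)%nat by apply: leq_trans.
by elim: k {Nk} => // k IH; apply: leq_ltn_trans IH (phi_incr k).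
Qed.

End Sequences.

Section Compactness.
Context {n : nat}.
Implicit Types (D : vec n -> Prop).

Lemma compact_set_chain D (U : nat -> vec n -> Prop) : compact_set D ->
  (forall k, Defs.open_set (U k)) -> (forall k v, U k v -> U k.+1 v) ->
  (forall v, D v -> exists k, U k v) -> exists K, forall v, D v -> U K v.
Proof.
move=> D_cpt U_open U_incr D_cov.
have U_mono k k' v : (k <= k')%nat -> U k v -> U k' v.
  elim: k' => [|k' IH]; first by rewrite leqn0 => /eqP ->.
  by rewrite leq_eqVlt => /orP [/eqP -> // | /IH H /H /U_incr].
have [l Hl] := D_cpt nat U U_open D_cov.
have [K HK] : exists K, forall k, In k l -> (k <= K)%nat.
  elim: l {Hl} => [|a l [K HK]]; first by exists 0%nat.
  exists (maxn a K) => k /= [<- | /HK k_le]; first exact: leq_maxl.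
  exact: leq_trans k_le (leq_maxr _ _).
exists K => v /Hl [k [/HK k_le Ukv]]; exact: U_mono k_le Ukv.
Qed.

Lemma compact_set_bounded D : compact_set D -> exists B, forall v, D v -> norm v <= B.
Proof.
move=> D_cpt.
have [K HK] : exists K, forall v, D v -> norm v < INR K.
  apply: (compact_set_chain (U := fun k v => norm v < INR k)) => // [k x Hx | k v | v _].
  - exists (INR k - norm x); split; first lra.
    by move=> y Hy; have := norm_le_sub y x; lra.
  - by rewrite S_INR; lra.
  - by have [k Hk] := INR_archimed 1 (norm v) Rlt_0_1; exists k; lra.
by exists (INR K) => v /HK; lra.
Qed.

Lemma compact_set_closed D (s : nat -> vec n) l :
  compact_set D -> (forall k, D (s k)) -> seq_conv s l -> D l.
Proof.
move=> D_cpt Ds s_cv; apply: NNPP => Dl_false.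
pose U k v := / INR k.+1 < norm (vsub v l).
have [K HK] : exists K, forall v, D v -> U K v.
  apply: (compact_set_chain (U := U)) => // [k x Hx | k v Hv | v Dv].
  - exists (norm (vsub x l) - / INR k.+1); split; first by rewrite /U in Hx; lra.
    move=> y Hy; rewrite /U; have := norm_sub_triangle x y l; rewrite (norm_subC x y); lra.
  - apply: Rle_lt_trans Hv; apply: Rinv_le_contravar; first exact/lt_0_INR/Nat.lt_0_succ.
    by rewrite (S_INR k.+1); lra.
  - have dist_gt0 : 0 < norm (vsub v l).
      case: (Rle_lt_or_eq_dec _ _ (norm_ge0 (vsub v l))) => // /esym /norm_eq0 vl0.
      case: Dl_false; suff <- : v = l by [].
      by apply: vec_ext => i; have := congr1 (fun f => f i) vl0; rewrite /vsub /vzero /=; lra.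
    have [N [HN N_gt0]] := archimed_cor1 _ dist_gt0; exists N.
    apply: Rle_lt_trans HN; apply: Rinv_le_contravar; first exact: lt_0_INR N_gt0.
    by rewrite S_INR; lra.
have [N HN] := s_cv (/ INR K.+1) (Rinv_0_lt_compat _ (lt_0_INR _ (Nat.lt_0_succ K))).
by have := HN N (leqnn N); have := HK _ (Ds N); rewrite /U; lra.
Qed.

End Compactness.

Lemma proj_set_normal_ineq {n} (D : vec n -> Prop) w z u : proj_set D w z -> D u ->
  dot (vsub w z) (vsub u z) <= 1/2 * dot (vsub u z) (vsub u z).
Proof.
move=> [_ z_min] Du; have := dot_le_of_norm (z_min u Du).
have -> : vsub w u = vsub (vsub w z) (vsub u z) by apply: vec_ext => i; rewrite /vsub; ring.
rewrite !dotBl !dotBr (dotC z w) (dotC u w) (dotC z u); lra.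
Qed.

Lemma indicator_in {n} (D : vec n -> Prop) v : D v -> indicator D v = Some 0.
Proof. by rewrite /indicator; case: excluded_middle_informative. Qed.

Lemma proj_set_frechet_subgrad {n} (D : vec n -> Prop) w z a : 0 <= a -> proj_set D w z ->
  frechet_subgrad (indicator D) z (vscale a (vsub w z)).
Proof.
move=> a_ge0 z_proj; exists 0; split; first exact: indicator_in (proj1 z_proj).
move=> eps eps_gt0; exists (2 * eps / (a + 1)); split; first by apply: Rdiv_lt_0_compat; lra.
move=> u [u_ne u_near]; rewrite /indicator; case: excluded_middle_informative => // Du.
have := proj_set_normal_ineq z_proj Du; rewrite dotZl -norm_sq.
set r := norm (vsub u z) in u_ne u_near *; set p := dot _ _ => p_le.
have r_lt : r * (a + 1) < 2 * eps.
  by move: u_near; rewrite /Rdiv => /(Rmult_lt_compat_r (a + 1)); rewrite Rmult_assoc Rinv_l; lra.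
have : a * p <= a * (1/2 * (r * r)) by apply: Rmult_le_compat_l.
have : r * (r * (a + 1)) < r * (2 * eps) by apply: Rmult_lt_compat_l.
have := Rle_0_sqr r; rewrite /Rsqr /=; lra.
Qed.

Lemma decreasing_bounded_steps_vanish (u : nat -> R) B :
  (forall t, u t.+1 <= u t) -> (forall t, B <= u t) ->
  forall eps, 0 < eps -> exists N, forall t, (N <= t)%nat -> u t - u t.+1 < eps.
Proof.
move=> u_dec u_lb.
have [l u_cv] : {l | Un_cv u l}.
  apply: decreasing_cv => //; exists (- B) => _ [i ->]; rewrite /opp_seq.
  by have := u_lb i; lra.
move=> eps eps_gt0; have [N HN] := u_cv (eps / 2) ltac:(lra).
exists N => t /leP Nt; rewrite /R_dist in HN.
have /Rabs_def2 := HN t Nt; have /Rabs_def2 := HN t.+1 ltac:(lia); lra.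
Qed.

Ltac dot_expand :=
  repeat progress rewrite ?mvB ?mvD ?mvZ ?dotBl ?dotBr ?dotDl ?dotDr ?dotZl ?dotZr.

Section MeritFunction.
Variables (m n : nat) (A : mat m n) (b : vec m) (lambda gamma : R).
Hypothesis lambda_max : is_lambda_max (mm (tr A) A) lambda.
Hypothesis lambda_gt0 : 0 < lambda.
Hypothesis gamma_gt0 : 0 < gamma.
Hypothesis gamma_small : gamma < 1 / (12 * lambda).

Local Notation M := (mm (tr A) A).
Local Notation c := (mv (tr A) b).
Local Notation alpha := (5 * gamma * lambda).

(* [quad_obj u = 1/2 |Au - b|^2 - 1/2 |b|^2], with gradient [grad u]. *)
Definition quad_obj (u : vec n) := 1/2 * dot (mv M u) u - dot c u.
Definition grad (u : vec n) := vsub (mv M u) c.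
Definition beta := gamma / (1 - alpha).
Definition grad_step (u : vec n) := vsub u (vscale beta (grad u)).

Definition merit (Y Z : vec n) := gamma * quad_obj Z +
  1/2 * ((1 - alpha) * dot (vsub Z Y) (vsub Z Y) - gamma * dot (mv M (vsub Z Y)) (vsub Z Y)).

Lemma gamma_lambda_bounds : 0 < gamma * lambda /\ 12 * (gamma * lambda) < 1.
Proof.
split; first exact: Rmult_lt_0_compat.
have : gamma * (12 * lambda) < 1 / (12 * lambda) * (12 * lambda).
  by apply: Rmult_lt_compat_r; lra.
rewrite /Rdiv Rmult_1_l Rinv_l; lra.
Qed.

Lemma M_sym : mat_sym M.
Proof. by move=> i j; apply: eq_bigr => k _; rewrite /tr Rmult_comm. Qed.

Lemma M_dot_sym v w : dot (mv M w) v = dot (mv M v) w.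
Proof. exact: dot_mv_sym M_sym v w. Qed.

Lemma M_psd v : 0 <= dot (mv M v) v.
Proof. by rewrite mv_mm dot_mv_tr; apply: dot_ge0. Qed.

Lemma M_quad_le v : dot (mv M v) v <= lambda * dot v v.
Proof. exact: quad_le_lambda_max M_sym lambda_max v. Qed.

(* |Mv|^4 <= <Mv, v> <M (Mv), Mv> <= lambda <Mv, v> |Mv|^2 *)
Lemma M_sq_le v : dot (mv M v) (mv M v) <= lambda * dot (mv M v) v.
Proof.
have := psd_cauchy_schwarz M_sym M_psd v (mv M v).
have := M_quad_le (mv M v); have := M_psd v; have := dot_ge0 (mv M v).
set a := dot (mv M v) (mv M v); set p := dot (mv M v) v => a_ge0 p_ge0 h hcs.
have : a * a <= lambda * p * a.
  by have := Rmult_le_compat_l p _ _ p_ge0 h; rewrite -Rmult_assoc (Rmult_comm p); lra.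
have : 0 <= lambda * p by apply: Rmult_le_pos; lra.
set q := lambda * p; move=> *; nra.
Qed.

Lemma M_norm_le v : norm (mv M v) <= lambda * norm v.
Proof.
have -> : lambda * norm v = norm (vscale lambda v) by rewrite normZ Rabs_pos_eq; lra.
apply: norm_le_of_dot.
rewrite dotZl dotZr.
have := M_sq_le v; have := M_quad_le v; have := M_psd v; move=> *; nra.
Qed.

Lemma merit_sub Y Z Z' : merit Y Z - merit Y Z' =
  1/2 * (1 - alpha) * (dot (vsub Z (grad_step Y)) (vsub Z (grad_step Y))
                     - dot (vsub Z' (grad_step Y)) (vsub Z' (grad_step Y))).
Proof.
have [h1 h2] := gamma_lambda_bounds.
rewrite /merit /quad_obj /grad_step /grad /beta; dot_expand.
rewrite !(M_dot_sym Y Z) !(M_dot_sym Y Z') !(dotC Z Y) !(dotC Z' Y) !(dotC Z (mv M Y))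
  !(dotC Z' (mv M Y)) !(dotC Z c) !(dotC Z' c).
field; lra.
Qed.

Lemma merit_le_of_proj_set (D : vec n -> Prop) Y Z Z' :
  proj_set D (grad_step Y) Z' -> D Z -> merit Y Z' <= merit Y Z.
Proof.
move=> [_ Z'_min] DZ; have [h1 h2] := gamma_lambda_bounds.
have := merit_sub Y Z' Z; rewrite -!norm_sq (norm_subC Z') (norm_subC Z).
have := Z'_min Z DZ; have := norm_ge0 (vsub (grad_step Y) Z').
have : 0 <= 1/2 * (1 - alpha) by lra.
set k := 1/2 * (1 - alpha); set n1 := norm (vsub _ Z'); set n2 := norm (vsub _ Z).
move=> k_ge0 n1_ge0 n1_le.
have /(Rmult_le_compat_l k _ _ k_ge0) : n1 * n1 <= n2 * n2 by nra.
lra.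
Qed.

Lemma merit_ge Y Z : gamma * quad_obj Z + 1/4 * dot (vsub Z Y) (vsub Z Y) <= merit Y Z.
Proof.
have [h1 h2] := gamma_lambda_bounds; rewrite /merit.
have := Rmult_le_compat_l gamma _ _ (Rlt_le _ _ gamma_gt0) (M_quad_le (vsub Z Y)).
have := dot_ge0 (vsub Z Y).
set d := dot (vsub Z Y) (vsub Z Y); set p := dot (mv M (vsub Z Y)) (vsub Z Y); move=> *; nra.
Qed.

Section YStep.
Variables Y Y' Z : vec n.
Hypothesis y_step : vscale 2 (vsub Z Y) =
  vadd (vscale (1 + alpha) (vsub Y' Y)) (vscale gamma (mv M (vsub Y' Y))).

Lemma y_step_split :
  let d := vsub Y' Y in
  vsub Z Y = vadd (vscale (1/2 * (1 + alpha)) d) (vscale (1/2 * gamma) (mv M d)) /\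
  vsub Z Y' = vadd (vscale (1/2 * (alpha - 1)) d) (vscale (1/2 * gamma) (mv M d)).
Proof.
by split; apply: vec_ext => i; have := congr1 (fun f => f i) y_step;
  rewrite /vadd /vsub /vscale /=; lra.
Qed.

Lemma merit_descent :
  merit Y' Z <= merit Y Z - alpha * (1 - alpha) / 2 * dot (vsub Y' Y) (vsub Y' Y).
Proof.
have [E1 E2] := y_step_split; have [h1 h2] := gamma_lambda_bounds.
set d := vsub Y' Y in E1 E2 *; clearbody d.
have E : merit Y Z - merit Y' Z = 1/2 * ((alpha - alpha * alpha) * dot d d
    + gamma * (1 - 2 * alpha) * dot (mv M d) d - gamma * gamma * dot (mv M d) (mv M d)).
  rewrite /merit E1 E2; dot_expand.
  rewrite ?(dotC d (mv M d)) ?(dotC d (mv M (mv M d))) ?(M_dot_sym d (mv M d))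
    ?(dotC (mv M d) (mv M (mv M d))).
  field.
have := M_sq_le d; have := M_psd d; have := dot_ge0 d.
set p0 := dot d d in E *; set p1 := dot (mv M d) d in E *;
set p2 := dot (mv M d) (mv M d) in E * => p0_ge0 p1_ge0 p2_le.
have : gamma * gamma * p2 <= gamma * gamma * lambda * p1.
  have gg_ge0 : 0 <= gamma * gamma by apply: Rle_0_sqr.
  by have := Rmult_le_compat_l _ _ _ gg_ge0 p2_le; lra.
have : 0 <= gamma * p1 * (1 - 11 * (gamma * lambda)).
  by apply: Rmult_le_pos; [apply: Rmult_le_pos|]; lra.
move=> *; nra.
Qed.

Lemma dist_le_y_step : norm (vsub Z Y) <= norm (vsub Y' Y).
Proof.
have [E1 _] := y_step_split; have [h1 h2] := gamma_lambda_bounds.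
set d := vsub Y' Y in E1 *.
rewrite E1; apply: Rle_trans (norm_vadd_le _ _) _.
rewrite !normZ !Rabs_pos_eq; try lra.
have := Rmult_le_compat_l (1/2 * gamma) _ _ ltac:(lra) (M_norm_le d).
have := norm_ge0 d; move=> *; nra.
Qed.

End YStep.

Lemma seq_conv_grad_step s l : seq_conv s l -> seq_conv (fun k => grad_step (s k)) (grad_step l).
Proof.
move=> s_cv; apply: seq_conv_sub => //; apply: seq_conv_scale.
exact: seq_conv_sub (seq_conv_mv _ s_cv) (seq_conv_const _).
Qed.

Section Iteration.
Variables (D : vec n -> Prop) (y z x : nat -> vec n).
Hypothesis D_compact : compact_set D.
Hypothesis y_update : forall t,
  mv (madd (mscale (5 * gamma * lambda + 1) idm) (mscale gamma M)) (y t.+1)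
  = vadd (x t) (vscale gamma c).
Hypothesis z_update : forall t,
  proj_set D (vscale (1 / (1 - 5 * lambda * gamma)) (vsub (vscale 2 (y t.+1)) (x t)))
    (z t.+1).
Hypothesis x_update : forall t, x t.+1 = vadd (x t) (vscale 2 (vsub (z t.+1) (y t.+1))).

Lemma x_eq t : x t =
  vsub (vadd (vscale (1 + alpha) (y t.+1)) (vscale gamma (mv M (y t.+1)))) (vscale gamma c).
Proof.
have := y_update t; rewrite mv_madd !mv_mscale mv_idm => H.
apply: vec_ext => i; have := congr1 (fun f => f i) H.
by rewrite /vadd /vsub /vscale /=; lra.
Qed.

Lemma z_proj_grad_step t : proj_set D (grad_step (y t.+1)) (z t.+1).
Proof.
have [h1 h2] := gamma_lambda_bounds.
suff <- : vscale (1 / (1 - 5 * lambda * gamma)) (vsub (vscale 2 (y t.+1)) (x t))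
          = grad_step (y t.+1) by [].
rewrite x_eq /grad_step /grad /beta; apply: vec_ext => i; rewrite /vadd /vsub /vscale.
by field; lra.
Qed.

Lemma y_step_iter t : vscale 2 (vsub (z t.+1) (y t.+1)) =
  vadd (vscale (1 + alpha) (vsub (y t.+2) (y t.+1))) (vscale gamma (mv M (vsub (y t.+2) (y t.+1)))).
Proof.
have := x_update t; rewrite (x_eq t) (x_eq t.+1) mvB => E.
apply: vec_ext => i; have := congr1 (fun f => f i) E.
by rewrite /vadd /vsub /vscale /=; lra.
Qed.

Let merit_iter t := merit (y t.+1) (z t.+1).
Local Notation kappa := (alpha * (1 - alpha) / 2).

Lemma kappa_gt0 : 0 < kappa.
Proof.
have [h1 h2] := gamma_lambda_bounds.
by apply: Rmult_lt_0_compat; [apply: Rmult_lt_0_compat|]; lra.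
Qed.

Lemma merit_iter_gap t :
  kappa * dot (vsub (z t.+1) (y t.+1)) (vsub (z t.+1) (y t.+1)) <= merit_iter t - merit_iter t.+1.
Proof.
have proj_le := merit_le_of_proj_set (z_proj_grad_step t.+1) (proj1 (z_proj_grad_step t)).
have := merit_descent (y_step_iter t).
have := Rmult_le_compat_l _ _ _ (Rlt_le _ _ kappa_gt0)
  (dot_le_of_norm (dist_le_y_step (y_step_iter t))).
rewrite /merit_iter; lra.
Qed.

Lemma merit_iter_lb : exists B, forall t, B <= merit_iter t.
Proof.
have [R HR] := compact_set_bounded D_compact.
exists (- gamma * (norm c * R)) => t; rewrite /merit_iter.
have Dz := proj1 (z_proj_grad_step t).
apply: Rle_trans (merit_ge _ _); rewrite /quad_obj.
have cz_le : dot c (z t.+1) <= norm c * R.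
  apply: Rle_trans (dot_le_norm _ _) _.
  exact: Rmult_le_compat_l (norm_ge0 c) (HR _ Dz).
have : 0 <= gamma * (1/2 * dot (mv M (z t.+1)) (z t.+1) - dot c (z t.+1) + norm c * R).
  by apply: Rmult_le_pos; have := M_psd (z t.+1); lra.
have := dot_ge0 (vsub (z t.+1) (y t.+1)); lra.
Qed.

Lemma z_sub_y_cvg : seq_conv (fun t => vsub (z t) (y t)) vzero.
Proof.
move=> eps eps_gt0; have [B HB] := merit_iter_lb; have k_gt0 := kappa_gt0.
have merit_dec t : merit_iter t.+1 <= merit_iter t.
  have := merit_iter_gap t.
  have := Rmult_le_pos _ _ (Rlt_le _ _ k_gt0) (dot_ge0 (vsub (z t.+1) (y t.+1))); lra.
have [N HN] := decreasing_bounded_steps_vanish merit_dec HB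
  (Rmult_lt_0_compat _ _ k_gt0 (Rmult_lt_0_compat _ _ eps_gt0 eps_gt0)).
exists N.+1 => -[|t] // /HN; rewrite vsub0r => h; apply: norm_lt_of_dot => //.
apply: (Rmult_lt_reg_l kappa) => //; have := merit_iter_gap t; lra.
Qed.

Lemma iterates_bounded : seq_bounded y /\ seq_bounded z /\ seq_bounded x.
Proof.
have [B HB] := compact_set_bounded D_compact.
have z_bd : seq_bounded z.
  apply: (@seq_bounded_eventually _ _ 1 B) => -[|t] // _.
  exact: HB (proj1 (z_proj_grad_step t)).
have y_bd : seq_bounded y.
  have := seq_bounded_sub z_bd (seq_conv_bounded z_sub_y_cvg).
  suff -> : (fun t => vsub (z t) (vsub (z t) (y t))) = y by [].
  by apply: functional_extensionality => t; apply: vec_ext => i; rewrite /vsub; ring.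
split=> //; split=> //.
have -> : x = fun t => vsub (mv (madd (mscale (5 * gamma * lambda + 1) idm) (mscale gamma M))
                                 (y t.+1)) (vscale gamma c).
  apply: functional_extensionality => t; rewrite y_update.
  by apply: vec_ext => i; rewrite /vadd /vsub; ring.
apply: seq_bounded_sub; last exact: seq_conv_bounded (seq_conv_const _).
by apply: seq_bounded_mv; have [B' HB'] := y_bd; exists B'.
Qed.

Lemma cluster_point_stationary yb zb xb : cluster_point3 y z x yb zb xb ->
  yb = zb /\ limiting_subgrad (indicator D) zb (vopp (mv (tr A) (vsub (mv A zb) b))).
Proof.
move=> [phi [phi_incr [y_cv [z_cv _]]]].
have [h1 h2] := gamma_lambda_bounds.
have beta_gt0 : 0 < beta by apply: Rdiv_lt_0_compat; lra.
have yb_zb : yb = zb.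
  have zy0 := seq_conv_unique (seq_conv_sub z_cv y_cv) (seq_conv_subseq phi_incr z_sub_y_cvg).
  by apply: vec_ext => i; have := congr1 (fun f => f i) zy0; rewrite /vsub /vzero /=; lra.
split=> //; subst yb.
have phiS_pos k : (0 < phi k.+1)%nat by apply: leq_ltn_trans (phi_incr k).
have shift s : seq_conv (fun k => s (phi k)) zb -> seq_conv (fun k => s (phi k.+1)) zb.
  by move=> /(seq_conv_subseq (phi := S)); apply.
have Dz k : D (z (phi k.+1)).
  by rewrite -(prednK (phiS_pos k)); exact: proj1 (z_proj_grad_step _).
exists (fun k => z (phi k.+1)),
  (fun k => vscale (/ beta) (vsub (grad_step (y (phi k.+1))) (z (phi k.+1)))).
split; first exact: shift.
split.
  exists 0; split; first exact: indicator_in (compact_set_closed D_compact Dz (shift _ z_cv)).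
  move=> eps eps_gt0; exists 0%nat => k _; exists 0; split; first exact: indicator_in.
  by rewrite Rminus_0_r Rabs_R0.
split.
  have -> : vopp (mv (tr A) (vsub (mv A zb) b)) = vscale (/ beta) (vsub (grad_step zb) zb).
    rewrite mvB -mv_mm /grad_step /grad; apply: vec_ext => i; rewrite /vopp /vsub /vscale.
    by field; lra.
  exact: seq_conv_scale (seq_conv_sub (seq_conv_grad_step (shift _ y_cv)) (shift _ z_cv)).
move=> k; rewrite -(prednK (phiS_pos k)).
apply: proj_set_frechet_subgrad (z_proj_grad_step _).
by apply: Rlt_le; apply: Rinv_0_lt_compat.
Qed.

End Iteration.
End MeritFunction.

Theorem mainTheorem12 (m n : nat) (A : mat m n) (b : vec m) (lambda : R)
  (Hlam : is_lambda_max (mm (tr A) A) lambda) (Hlampos : 0 < lambda)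
  (D : vec n -> Prop) (HDne : exists d, D d) (HDc : compact_set D)
  (gamma : R) (Hg0 : 0 < gamma) (Hg1 : gamma < 1 / (12 * lambda))
  (y z x : nat -> vec n)
  (Hy : forall t,
     mv (madd (mscale (5 * gamma * lambda + 1) idm) (mscale gamma (mm (tr A) A)))
        (y (S t))
     = vadd (x t) (vscale gamma (mv (tr A) b)))
  (Hz : forall t,
     proj_set D (vscale (1 / (1 - 5 * lambda * gamma))
                        (vsub (vscale 2 (y (S t))) (x t)))
                (z (S t)))
  (Hx : forall t, x (S t) = vadd (x t) (vscale 2 (vsub (z (S t)) (y (S t))))) :
  (seq_bounded y /\ seq_bounded z /\ seq_bounded x) /\
  forall yb zb xb, cluster_point3 y z x yb zb xb ->
    yb = zb /\
    limiting_subgrad (indicator D) zb (vopp (mv (tr A) (vsub (mv A zb) b))).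
Proof.
split.
- exact (iterates_bounded Hlam Hlampos Hg0 Hg1 HDc Hy Hz Hx).
- exact (cluster_point_stationary Hlam Hlampos Hg0 Hg1 HDc Hy Hz Hx).
Qed.
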